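(* Let $G$ and $H$ be connected graphs of orders $m$ and $n\geq 2$, respectively, with $\mathrm{ldim}_f(H)=\frac{n}{2}$. Then $\mathrm{ldim}_f(G\square H)\geq \frac{n}{2}$.
   Context: All graphs are finite, simple and connected; $d$ is the shortest-path distance. For an edge $uv$ of a graph $X$, $L_X(uv)=\{x\in V(X): d_X(u,x)\neq d_X(v,x)\}$. A function $f:V(X)\to[0,1]$ is a local resolving function of $X$ if $\sum_{x\in L_X(uv)}f(x)\geq 1$ for every edge $uv$; $\mathrm{ldim}_f(X)$ is the minimum of $\sum_{v}f(v)$ over all local resolving functions. The Cartesian product $G\square H$ has vertex set $V(G)\times V(H)$, with $(u_1,v_1)$ adjacent to $(u_2,v_2)$ iff ($u_1u_2\in E(G)$ and $v_1=v_2$) or ($u_1=u_2$ and $v_1v_2\in E(H)$). *)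

From HB Require Import structures.
From mathcomp Require Import all_boot all_order all_algebra.
Set Implicit Arguments. Unset Strict Implicit. Unset Printing Implicit Defensive.
Import Order.TTheory GRing.Theory Num.Theory.

Definition simple_graph (T : finType) (e : rel T) : Prop :=
  symmetric e /\ irreflexive e.

Definition connected_graph (T : finType) (e : rel T) : Prop :=
  forall x y : T, connect e x y.

Definition walk_of_len (T : finType) (e : rel T) (x y : T) (k : nat) : bool :=
  [exists p : k.-tuple T, path e x p && (last x p == y)].

(* shortest-path distance: least k (< #|T|) with a walk of length k from x to y
   (for connected graphs a shortest path has length < #|T|) *)
Definition dist (T : finType) (e : rel T) (x y : T) : nat :=
  find (walk_of_len e x y) (iota 0 #|T|).

Definition resolving_set (T : finType) (e : rel T) (u v : T) : pred T :=
  [pred x | dist e u x != dist e v x].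

Definition local_resolving_fun (R : realFieldType) (T : finType) (e : rel T)
    (f : T -> R) : Prop :=
  (forall x, 0 <= f x <= 1)%R /\
  (forall u v, e u v -> (1 <= \sum_(x in resolving_set e u v) f x)%R).

Definition is_ldimf (R : realFieldType) (T : finType) (e : rel T) (r : R) : Prop :=
  (exists f : T -> R, local_resolving_fun e f /\ (\sum_x f x)%R = r) /\
  (forall f : T -> R, local_resolving_fun e f -> (r <= \sum_x f x)%R).

Definition cart_prod (T1 T2 : finType) (e1 : rel T1) (e2 : rel T2) : rel (T1 * T2) :=
  fun p q => (e1 p.1 q.1 && (p.2 == q.2)) || ((p.1 == q.1) && e2 p.2 q.2).

From HB Require Import structures.
From mathcomp Require Import all_boot all_order all_algebra.
From mathcomp Require Import zify.
Import Order.TTheory GRing.Theory Num.Theory.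
Set Implicit Arguments. Unset Strict Implicit.

(* Proof of  ldim_f(G □ H) >= ldim_f(H)  (the theorem is the case
   ldim_f(H) = n/2).

   1. Distances in G □ H add up:
        d((g,h),(x,y)) = d_G(g,x) + d_H(h,y),
      because a walk in G □ H splits into a G-walk and an H-walk and
      conversely.  We first characterise [dist] as the least length of a
      walk, then prove the product formula.
   2. Consequently, for an edge hh' of H and any g in G, every vertex (a,y)
      resolving the "vertical" edge (g,h)(g,h') has y resolving hh'.
   3. Given a local resolving function f of G □ H, the truncated column sums
        F(y) = min(1, sum_a f(a,y))
      form a local resolving function of H: for an edge hh' the column sums
      over L_H(hh') dominate the f-weight of L((g,h),(g,h')) >= 1, and
      truncation at 1 does not destroy a total of at least 1.
   4. Hence  ldim_f(H) <= sum_y F(y) <= sum_p f(p). *)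

Inductive walk (T : Type) (e : rel T) : T -> T -> nat -> Prop :=
| walk0 x : walk e x x 0
| walkS x z y k : e x z -> walk e z y k -> walk e x y k.+1.

Lemma walk_of_lenP (T : finType) (e : rel T) x y k :
  walk_of_len e x y k <-> walk e x y k.
Proof.
split.
- move=> /existsP [[s /= /eqP <-] /andP [pth /eqP <-]].
  elim: s x pth => [|z s IH] x /=; first by constructor.
  by move=> /andP [exz pth]; apply: walkS exz (IH _ pth).
- elim=> {x y k} [x|x z y k exz _ /existsP [p /andP [pth lst]]]; apply/existsP.
  + by exists [tuple]; rewrite /= eqxx.
  + by exists [tuple of z :: p]; rewrite /= exz pth.
Qed.

Lemma walk_connect (T : finType) (e : rel T) x y k : walk e x y k -> connect e x y.
Proof.
elim=> {x y k} [x|x z y k exz _ czy]; first exact: connect0.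
exact: connect_trans (connect1 exz) czy.
Qed.

(* Connected vertices are joined by a walk shorter than the number of
   vertices (remove the loops of any path). *)
Lemma connect_short_walk (T : finType) (e : rel T) x y : connect e x y ->
  exists2 k, (k < #|T|)%N & walk e x y k.
Proof.
move=> /connectP [p pth ->]; case: (shortenP pth) => q qpth uq _.
exists (size q).
- by have := max_card (mem (x :: q)); move/card_uniqP: uq => -> /=.
- elim: q x qpth {uq pth} => [|z q IH] x /=; first by constructor.
  by move=> /andP [exz qpth]; apply: walkS exz (IH _ qpth).
Qed.

Lemma find_iota_least (P : pred nat) N k : (k < N)%N -> P k ->
  P (find P (iota 0 N)) /\ (forall j, P j -> find P (iota 0 N) <= j)%N.
Proof.
move=> kN Pk.
have has_witness : has P (iota 0 N) by apply/hasP; exists k; rewrite ?mem_iota.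
have lt_find : (find P (iota 0 N) < N)%N by rewrite -[ltnRHS](size_iota 0) -has_find.
split; first by have := nth_find 0 has_witness; rewrite nth_iota.
move=> j Pj; rewrite leqNgt; apply/negP => jlt.
by have := before_find 0 jlt; rewrite nth_iota ?Pj //; lia.
Qed.

Lemma dist_shortest (T : finType) (e : rel T) x y : connect e x y ->
  walk e x y (dist e x y) /\ (forall j, walk e x y j -> dist e x y <= j)%N.
Proof.
move=> /connect_short_walk [k kN wk].
have [wd dmin] := find_iota_least kN (proj2 (walk_of_lenP e x y k) wk).
by split; [exact/walk_of_lenP | move=> j /walk_of_lenP; exact: dmin].
Qed.

Lemma dist_eq_shortest (T : finType) (e : rel T) x y k : walk e x y k ->
  (forall j, walk e x y j -> k <= j)%N -> dist e x y = k.
Proof.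
move=> wk kmin; have [wd dmin] := dist_shortest (walk_connect wk).
by apply/eqP; rewrite eqn_leq dmin // kmin.
Qed.

Section CartesianProduct.
Variables (TG TH : finType) (eG : rel TG) (eH : rel TH).
Local Notation eP := (cart_prod eG eH).

Lemma walk_lift_fibre g h y b : walk eH h y b -> walk eP (g, h) (g, y) b.
Proof.
elim=> {h y b} [h|h z y k ehz _ IH]; first by constructor.
by apply: walkS IH; rewrite /cart_prod /= eqxx ehz orbT.
Qed.

Lemma walk_pair g x a h y b :
  walk eG g x a -> walk eH h y b -> walk eP (g, h) (x, y) (a + b).
Proof.
move=> wG wH; elim: wG => {g x a} [g|g z x k egz _ IH]; first exact: walk_lift_fibre.
by rewrite addSn; apply: walkS IH; rewrite /cart_prod /= egz eqxx.
Qed.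

Lemma walk_proj p q k : walk eP p q k ->
  exists a b, [/\ k = a + b, walk eG p.1 q.1 a & walk eH p.2 q.2 b].
Proof.
elim=> {p q k} [p|p z q k epz _ [a [b [-> wa wb]]]].
  by exists 0, 0; split; constructor.
case/orP: epz => [/andP [e1 /eqP e2]|/andP [/eqP e1 e2]].
- by exists a.+1, b; split; [lia | apply: walkS e1 wa | rewrite e2].
- by exists a, b.+1; split; [lia | rewrite e1 | apply: walkS e2 wb].
Qed.

Lemma dist_cart_prod g h x y : connected_graph eG -> connected_graph eH ->
  dist eP (g, h) (x, y) = dist eG g x + dist eH h y.
Proof.
move=> cG cH; have [wG minG] := dist_shortest (cG g x).
have [wH minH] := dist_shortest (cH h y).
apply: dist_eq_shortest; first exact: walk_pair.
by move=> j /walk_proj [a [b [-> /minG ? /minH ?]]]; lia.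
Qed.

Lemma resolving_vertical_edge g h h' p :
  connected_graph eG -> connected_graph eH ->
  p \in resolving_set eP (g, h) (g, h') -> p.2 \in resolving_set eH h h'.
Proof.
move: p => [a y] cG cH; rewrite !inE !dist_cart_prod //=.
by apply: contra => /eqP ->.
Qed.

End CartesianProduct.

Local Open Scope ring_scope.

Lemma ler_sum_sub (R : realFieldType) (T : finType) (A B : pred T) (f : T -> R) :
  (forall x, 0 <= f x) -> (forall x, A x -> B x) ->
  \sum_(x | A x) f x <= \sum_(x | B x) f x.
Proof.
move=> f0 AB; rewrite [leLHS]big_mkcond [leRHS]big_mkcond /=.
apply: ler_sum => x _; case: ifP => [/AB -> //|_]; case: ifP => // _.
Qed.

Lemma min1_subadd (R : realFieldType) (a b : R) : 0 <= a -> 0 <= b ->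
  Num.min 1 (a + b) <= Num.min 1 a + Num.min 1 b.
Proof.
move=> a0 b0; have b1_0 : 0 <= Num.min 1 b by rewrite le_min ler01.
have [_|_] := leP 1 a; first by rewrite ge_min lerDl b1_0.
have [_|_] := leP 1 b; first by rewrite ge_min lerDr a0.
by rewrite ge_min lexx orbT.
Qed.

Lemma min1_sum (R : realFieldType) (I : Type) (r : seq I) (P : pred I) (F : I -> R) :
  (forall i, 0 <= F i) ->
  Num.min 1 (\sum_(i <- r | P i) F i) <= \sum_(i <- r | P i) Num.min 1 (F i).
Proof.
move=> F0; suff [] : 0 <= \sum_(i <- r | P i) F i /\
    Num.min 1 (\sum_(i <- r | P i) F i) <= \sum_(i <- r | P i) Num.min 1 (F i) by [].
elim/big_rec2: _ => [|i s1 s2 _ [s2_0 IH]]; first by rewrite min_r.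
split; first exact: addr_ge0.
exact: le_trans (min1_subadd (F0 i) s2_0) (lerD (lexx _) IH).
Qed.

Lemma truncated_column_sums_resolving (R : realFieldType) (TG TH : finType)
    (eG : rel TG) (eH : rel TH) (g0 : TG) (f : TG * TH -> R) :
  connected_graph eG -> connected_graph eH ->
  local_resolving_fun (cart_prod eG eH) f ->
  local_resolving_fun eH (fun y => Num.min 1 (\sum_a f (a, y))).
Proof.
move=> cG cH [f01 fres]; have f0 p : 0 <= f p by case/andP: (f01 p).
split=> [y|h h' ehh']; first by rewrite ge_min lexx le_min ler01 sumr_ge0.
set L := resolving_set eH h h'.
have edge_vert : cart_prod eG eH (g0, h) (g0, h') by rewrite /cart_prod /= eqxx ehh' orbT.
have L_cols : 1 <= \sum_(y in L) \sum_a f (a, y).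
  rewrite exchange_big pair_big_dep /=; apply: le_trans (fres _ _ edge_vert) _.
  apply: le_trans (ler_sum_sub (B := fun p => true && (p.2 \in L)) f0 _) _.
    by move=> p /(resolving_vertical_edge cG cH).
  by apply: ler_sum => -[a y] _.
apply: le_trans (min1_sum _ _ _) => [|y]; last exact: sumr_ge0.
by rewrite (min_l L_cols).
Qed.

Lemma ldimf_cart_prod_ge (R : realFieldType) (TG TH : finType)
    (eG : rel TG) (eH : rel TH) (r : R) :
  connected_graph eG -> connected_graph eH -> (0 < #|TG|)%N -> is_ldimf eH r ->
  forall f : TG * TH -> R, local_resolving_fun (cart_prod eG eH) f ->
    r <= \sum_p f p.
Proof.
move=> cG cH /card_gt0P [g0 _] [_ rmin] f fres.
apply: le_trans (rmin _ (truncated_column_sums_resolving g0 cG cH fres)) _.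
have trunc_le y : Num.min 1 (\sum_a f (a, y)) <= \sum_a f (a, y).
  by rewrite ge_min lexx orbT.
apply: le_trans (ler_sum _ (fun y _ => trunc_le y)) _.
by rewrite exchange_big pair_big /=; apply: ler_sum => -[a y] _.
Qed.

(* The paper's Theorem 3.11 is the case ldim_f(H) = n/2. *)
Theorem theorem3p11 (R : realFieldType) (TG TH : finType)
    (eG : rel TG) (eH : rel TH)
    (sG : simple_graph eG) (cG : connected_graph eG) (neG : (0 < #|TG|)%N)
    (sH : simple_graph eH) (cH : connected_graph eH) (n2 : (2 <= #|TH|)%N)
    (hH : is_ldimf eH ((#|TH|%:R / 2%:R) : R)) :
  forall f : TG * TH -> R, local_resolving_fun (cart_prod eG eH) f ->
    ((#|TH|%:R / 2%:R) <= \sum_p f p)%R.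
Proof. exact: ldimf_cart_prod_ge cG cH neG hH. Qed.
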